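(* For the quasi-random router for any transition matrix $P$, $$\left|I_{v,u}[z,z')-(z'-z)P_{v,u}\right|\le 2\lg(z'-z+1)$$ for all $v,u\in V$ and all $z,z'\in\mathbb{Z}_{\ge0}$ with $z'>z$.
   Context: $V=\{1,\dots,N\}$, $P$ a stochastic $N\times N$ matrix, $\mathcal N(v)=\{u:P_{v,u}>0\}$, $\delta(v)=|\mathcal N(v)|$; $\lg=\log_2$. The van der Corput function $\psi:\mathbb{Z}_{\ge0}\to[0,1)$ is $\psi(0)=0$ and, for $i>0$ written in binary as $i=\sum_{j=0}^{\lfloor\lg i\rfloor}\beta_j(i)2^j$ with $\beta_j(i)\in\{0,1\}$, $\psi(i)=\sum_{j=0}^{\lfloor\lg i\rfloor}\beta_j(i)2^{-(j+1)}$. The quasi-random router: fix an ordering $u_1,\dots,u_{\delta(v)}$ of $\mathcal N(v)$ and set $\sigma_v(i)=u_k$ where $k$ is such that $\sum_{j=1}^{k-1}P_{v,u_j}\le\psi(i)<\sum_{j=1}^{k}P_{v,u_j}$. $I_{v,u}[z,z')=|\{j\in\{z,\dots,z'-1\}:\sigma_v(j)=u\}|$. *)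

From Stdlib Require Import Reals Lra Lia Arith List.
Open Scope R_scope.

Definition inV (N v : nat) : Prop := (1 <= v <= N)%nat.

Definition sumR (f : nat -> R) (l : list nat) : R := fold_right Rplus 0 (map f l).

Definition stochastic (N : nat) (P : nat -> nat -> R) : Prop :=
  (forall v u, inV N v -> inV N u -> 0 <= P v u) /\
  (forall v, inV N v -> sumR (P v) (seq 1 N) = 1).

Definition lg (x : R) : R := ln x / ln 2.

Definition beta (j i : nat) : R := if Nat.testbit i j then 1 else 0.

Definition psi (i : nat) : R :=
  match i with
  | O => 0
  | S _ => sumR (fun j => beta j i * (/ 2) ^ (S j)) (seq 0 (S (Nat.log2 i)))
  end.

Definition is_nbr_ordering (N : nat) (P : nat -> nat -> R) (v : nat) (ord : list nat) : Prop :=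
  NoDup ord /\ (forall u, In u ord <-> (inV N u /\ 0 < P v u)).

(* sigma_v(i) = u_k where sum_{j<k} P_{v,u_j} <= psi(i) < sum_{j<=k} P_{v,u_j}
   (0-based index k here: u_{k+1} = nth k ord) *)
Definition is_qr_router (P : nat -> nat -> R) (v : nat) (ord : list nat)
    (sigma_v : nat -> nat) : Prop :=
  forall i, exists k, (k < length ord)%nat /\ sigma_v i = nth k ord 0%nat /\
    sumR (P v) (firstn k ord) <= psi i < sumR (P v) (firstn (S k) ord).

Definition Icount (sigma_v : nat -> nat) (u z z' : nat) : nat :=
  length (filter (fun j => Nat.eqb (sigma_v j) u) (seq z (z' - z))).

(* Fix v and a neighbour u = u_{k+1} of v, and let a and b = a + P v u be the
   prefix sums of the neighbour ordering before and after u.  By definition of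
   the router, sigma_v(i) = u exactly when a <= psi(i) < b, so the count
   I_{v,u}[z,z') is the number of van der Corput points psi(j), z <= j < z',
   that fall into the interval [a,b).

   The proof has three layers.
   1. Dyadic structure of psi: psi(i) = (i mod 2)/2 + psi(i/2)/2, hence the
      dyadic cell floor(2^m psi(i)) depends only on the m low bits of i, and
      the cells of any 2^m consecutive indices are exactly 0, ..., 2^m - 1.
   2. Consequently every window of 2^m consecutive points hits [0,x) within
      1 of 2^m x, and hence [a,b) within 2 of 2^m (b - a).
   3. A window of arbitrary length n splits into a block of length 2^m,
      2^m <= n < 2^(m+1), followed by a window of length < 2^m; induction on n
      turns a per-block error e into the error e * lg(n+1).
   A non-neighbour u (P v u = 0) is never chosen, and the bound is trivial. *)

From Stdlib Require Import Reals Lra Lia Arith List Permutation.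
Open Scope R_scope.

Lemma sumR_cons (f : nat -> R) (a : nat) (l : list nat) :
  sumR f (a :: l) = f a + sumR f l.
Proof. reflexivity. Qed.

Lemma sumR_app (f : nat -> R) (l1 l2 : list nat) :
  sumR f (l1 ++ l2) = sumR f l1 + sumR f l2.
Proof. induction l1; simpl; [unfold sumR; simpl; lra|]. rewrite !sumR_cons, IHl1. lra. Qed.

Lemma sumR_map (f : nat -> R) (g : nat -> nat) (l : list nat) :
  sumR f (map g l) = sumR (fun x => f (g x)) l.
Proof. induction l; [reflexivity|]. simpl. rewrite !sumR_cons, IHl. reflexivity. Qed.

Lemma sumR_ext (f g : nat -> R) (l : list nat) :
  (forall x, f x = g x) -> sumR f l = sumR g l.
Proof. intros H; induction l; [reflexivity|]. rewrite !sumR_cons, IHl, H. reflexivity. Qed.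

Lemma sumR_scale (f : nat -> R) (c : R) (l : list nat) :
  sumR (fun x => f x * c) l = sumR f l * c.
Proof. induction l; [unfold sumR; simpl; lra|]. rewrite !sumR_cons, IHl. lra. Qed.

Lemma sumR_perm (f : nat -> R) (l l' : list nat) :
  Permutation l l' -> sumR f l = sumR f l'.
Proof. induction 1; rewrite ?sumR_cons; lra. Qed.

Lemma sumR_filter_zero (f : nat -> R) (p : nat -> bool) (l : list nat) :
  (forall x, In x l -> p x = false -> f x = 0) -> sumR f (filter p l) = sumR f l.
Proof.
  induction l as [|x l IH]; intro H; [reflexivity|]. simpl.
  assert (IH' := IH (fun y Hy => H y (or_intror Hy))).
  destruct (p x) eqn:E; rewrite ?sumR_cons, IH'; [lra|].
  rewrite (H x (or_introl eq_refl) E). lra.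
Qed.

Lemma sumR_firstn_S (f : nat -> R) (l : list nat) (k : nat) : (k < length l)%nat ->
  sumR f (firstn (S k) l) = sumR f (firstn k l) + f (nth k l 0%nat).
Proof.
  revert k; induction l as [|x l IH]; intros k Hk; simpl in Hk; [lia|].
  destruct k as [|k]; [unfold sumR; simpl; lra|].
  change (firstn (S (S k)) (x :: l)) with (x :: firstn (S k) l).
  change (firstn (S k) (x :: l)) with (x :: firstn k l).
  rewrite !sumR_cons, IH by lia. simpl. lra.
Qed.

Lemma sumR_firstn_mono (f : nat -> R) (l : list nat) :
  (forall x, In x l -> 0 <= f x) ->
  forall k k', (k <= k')%nat -> sumR f (firstn k l) <= sumR f (firstn k' l).
Proof.
  induction l as [|x l IH]; intros Hf k k' Hk.
  - rewrite !firstn_nil. lra.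
  - assert (Hfl : forall y, In y l -> 0 <= f y) by (intros; apply Hf; right; auto).
    pose proof (Hf x (or_introl eq_refl)).
    destruct k as [|k], k' as [|k']; try lia; rewrite ?firstn_cons, ?sumR_cons.
    + lra.
    + pose proof (IH Hfl 0%nat k' ltac:(lia)) as Hk'.
      rewrite firstn_0 in *. unfold sumR in *; simpl in *. lra.
    + pose proof (IH Hfl k k' ltac:(lia)). lra.
Qed.

Definition count_seq (p : nat -> bool) (z n : nat) : nat := length (filter p (seq z n)).

Lemma count_seq_add (p : nat -> bool) (z n1 n2 : nat) :
  count_seq p z (n1 + n2) = (count_seq p z n1 + count_seq p (z + n1) n2)%nat.
Proof. unfold count_seq. rewrite seq_app, filter_app, length_app. reflexivity. Qed.

Lemma count_seq_mono (f g : nat -> bool) (z n : nat) :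
  (forall j, f j = true -> g j = true) -> (count_seq f z n <= count_seq g z n)%nat.
Proof.
  intro H. unfold count_seq. revert z. induction n as [|n IH]; intro z; simpl; [lia|].
  specialize (IH (S z)). destruct (f z) eqn:Ef; [rewrite (H z Ef); simpl; lia|].
  destruct (g z); simpl; lia.
Qed.

Lemma count_seq_split (f g h : nat -> bool) (z n : nat) :
  (forall j, Nat.b2n (g j) = (Nat.b2n (f j) + Nat.b2n (h j))%nat) ->
  count_seq g z n = (count_seq f z n + count_seq h z n)%nat.
Proof.
  intro H. unfold count_seq. revert z. induction n as [|n IH]; intro z; simpl; [lia|].
  specialize (IH (S z)). specialize (H z).
  destruct (f z), (g z), (h z); simpl in *; lia.
Qed.

Lemma length_filter_perm (p : nat -> bool) (l l' : list nat) :
  Permutation l l' -> length (filter p l) = length (filter p l').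
Proof.
  induction 1; simpl; auto.
  - destruct (p x); simpl; auto.
  - destruct (p x), (p y); simpl; auto.
  - congruence.
Qed.

Lemma ln2_pos : 0 < ln 2.
Proof. pose proof ln_lt_2. lra. Qed.

Lemma lg_one : lg 1 = 0.
Proof. unfold lg. rewrite ln_1. unfold Rdiv. ring. Qed.

Lemma lg_mono (x y : R) : 0 < x -> x <= y -> lg x <= lg y.
Proof.
  intros Hx Hxy. unfold lg, Rdiv. apply Rmult_le_compat_r.
  - left. apply Rinv_0_lt_compat, ln2_pos.
  - destruct Hxy as [H|H]; [left; apply ln_increasing; lra|right; congruence].
Qed.

Lemma lg_double (x : R) : 0 < x -> lg (2 * x) = 1 + lg x.
Proof. intro Hx. unfold lg. rewrite ln_mult by lra. pose proof ln2_pos. field. lra. Qed.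

Lemma dyadic_discrepancy (p : nat -> bool) (c e : R) :
  (forall z m, Rabs (INR (count_seq p z (2 ^ m)) - 2 ^ m * c) <= e) ->
  forall n z, Rabs (INR (count_seq p z n) - INR n * c) <= e * lg (INR n + 1).
Proof.
  intros Hblock n.
  assert (He : 0 <= e) by (eapply Rle_trans; [apply Rabs_pos|apply (Hblock 0%nat 0%nat)]).
  induction n as [n IH] using (well_founded_induction lt_wf). intro z.
  destruct (Nat.eq_dec n 0) as [->|Hn0].
  { unfold count_seq. simpl. rewrite Rplus_0_l, lg_one.
    replace (0 - 0 * c) with 0 by ring. rewrite Rabs_R0. lra. }
  destruct (Nat.log2_spec n ltac:(lia)) as [HM1 HM2].
  set (m := Nat.log2 n) in *. set (M := (2 ^ m)%nat) in *.
  change (2 ^ S m)%nat with (2 * M)%nat in HM2.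
  set (r := (n - M)%nat).
  assert (Hsplit : n = (M + r)%nat) by lia.
  assert (HnR : INR n = INR M + INR r) by (rewrite <- plus_INR; f_equal; exact Hsplit).
  assert (HMpow : INR M = 2 ^ m) by (unfold M; rewrite pow_INR; reflexivity).
  assert (Hr : (r + 1 <= M)%nat) by lia.
  assert (Hlg : 1 + lg (INR r + 1) <= lg (INR n + 1)).
  { rewrite <- lg_double by (pose proof (pos_INR r); lra). apply lg_mono.
    - pose proof (pos_INR r); lra.
    - rewrite HnR. apply le_INR in Hr. rewrite plus_INR in Hr. simpl in Hr. lra. }
  pose proof (IH r ltac:(lia) (z + M)%nat) as Htail.
  pose proof (Hblock z m) as Hhead. fold M in Hhead. rewrite <- HMpow in Hhead.
  rewrite Hsplit, count_seq_add, !plus_INR.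
  replace (INR (count_seq p z M) + INR (count_seq p (z + M) r) - (INR M + INR r) * c)
    with ((INR (count_seq p z M) - INR M * c) + (INR (count_seq p (z + M) r) - INR r * c))
    by ring.
  eapply Rle_trans; [apply Rabs_triang|]. rewrite <- HnR. nra.
Qed.

(* The van der Corput sequence.  vdc_trunc K i keeps the first K binary digits
   of psi(i); it is the induction vehicle for the recursion of psi. *)

Definition vdc_trunc (K i : nat) : R := sumR (fun j => beta j i * (/ 2) ^ (S j)) (seq 0 K).

Lemma mod2_cases (i : nat) : (i mod 2 = 0 \/ i mod 2 = 1)%nat.
Proof. pose proof (Nat.mod_upper_bound i 2). lia. Qed.

Lemma vdc_trunc_S (K i : nat) : vdc_trunc (S K) i = INR (i mod 2) / 2 + vdc_trunc K (i / 2) / 2.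
Proof.
  unfold vdc_trunc. change (seq 0 (S K)) with (0%nat :: seq 1 K).
  rewrite sumR_cons, <- seq_shift, sumR_map.
  unfold Rdiv; rewrite <- sumR_scale.
  f_equal.
  - unfold beta. rewrite <- Nat.bit0_mod. destruct (Nat.testbit i 0); simpl; lra.
  - apply sumR_ext. intro j. unfold beta. rewrite Nat.div2_bits. simpl. lra.
Qed.

Lemma vdc_trunc_bound (K i : nat) : 0 <= vdc_trunc K i <= 1 - (/ 2) ^ K.
Proof.
  revert i; induction K; intro i.
  - unfold vdc_trunc, sumR; simpl; lra.
  - rewrite vdc_trunc_S. specialize (IHK (i / 2)%nat). rewrite <- tech_pow_Rmult.
    destruct (mod2_cases i) as [E|E]; rewrite E; simpl INR; lra.
Qed.

(* Digits above the leading bit of i vanish, so truncation beyond it is exact. *)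
Lemma vdc_trunc_psi (K i : nat) : (S (Nat.log2 i) <= K)%nat -> vdc_trunc K i = psi i.
Proof.
  induction K; intro H; [lia|].
  destruct (Nat.eq_dec (S (Nat.log2 i)) (S K)) as [E|E].
  - destruct i as [|i].
    { simpl in E. injection E as <-. unfold vdc_trunc, sumR, beta; simpl; lra. }
    rewrite <- E. reflexivity.
  - rewrite <- IHK by lia. unfold vdc_trunc. rewrite seq_S, sumR_app.
    unfold sumR at 2, beta; simpl. rewrite Nat.bits_above_log2 by lia. lra.
Qed.

Lemma psi_bound (i : nat) : 0 <= psi i < 1.
Proof.
  rewrite <- (vdc_trunc_psi (S (Nat.log2 i)) i) by lia.
  pose proof (vdc_trunc_bound (S (Nat.log2 i)) i).
  pose proof (pow_lt (/ 2) (S (Nat.log2 i)) ltac:(lra)). lra.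
Qed.

Lemma psi_rec (i : nat) : psi i = INR (i mod 2) / 2 + psi (i / 2) / 2.
Proof.
  rewrite <- (vdc_trunc_psi (S (S (Nat.log2 i))) i) by lia.
  rewrite vdc_trunc_S, vdc_trunc_psi; [reflexivity|].
  pose proof (Nat.div_mod_eq i 2).
  pose proof (Nat.log2_le_mono (i / 2) i ltac:(lia)). lia.
Qed.

(* The dyadic cell of psi(i) at level m, i.e. floor(2^m psi(i)): the m low
   bits of i read in reverse order. *)
Fixpoint cell (m i : nat) : nat :=
  match m with O => O | S m' => (i mod 2 * 2 ^ m' + cell m' (i / 2))%nat end.

Lemma cell_lt (m i : nat) : (cell m i < 2 ^ m)%nat.
Proof.
  revert i; induction m; intro i; [simpl; lia|]. cbn [cell].
  specialize (IHm (i / 2)%nat). change (2 ^ S m)%nat with (2 * 2 ^ m)%nat.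
  destruct (mod2_cases i) as [E|E]; rewrite E; lia.
Qed.

Lemma cell_psi (m i : nat) : INR (cell m i) <= 2 ^ m * psi i < INR (cell m i) + 1.
Proof.
  revert i; induction m; intro i.
  - simpl. pose proof (psi_bound i). lra.
  - specialize (IHm (i / 2)%nat). cbn [cell]. rewrite plus_INR, mult_INR, pow_INR.
    replace (INR 2) with 2 by (simpl; lra).
    replace (2 ^ S m * psi i) with (INR (i mod 2) * 2 ^ m + 2 ^ m * psi (i / 2))
      by (rewrite (psi_rec i); simpl; field).
    lra.
Qed.

Lemma cell_inj (m i i' : nat) : (i < i' + 2 ^ m)%nat -> (i' < i + 2 ^ m)%nat ->
  cell m i = cell m i' -> i = i'.
Proof.
  revert i i'; induction m; intros i i' H1 H2 H3; [simpl in *; lia|].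
  cbn [cell] in H3. pose proof (cell_lt m (i / 2)). pose proof (cell_lt m (i' / 2)).
  change (2 ^ S m)%nat with (2 * 2 ^ m)%nat in *.
  pose proof (Nat.div_mod_eq i 2). pose proof (Nat.div_mod_eq i' 2).
  assert (Elow : i mod 2 = i' mod 2).
  { destruct (mod2_cases i) as [E|E]; destruct (mod2_cases i') as [E'|E'];
      rewrite E, E' in H3; lia. }
  rewrite Elow in H3. pose proof (mod2_cases i).
  assert (i / 2 = i' / 2)%nat by (apply IHm; lia). lia.
Qed.

(* In a window of 2^m consecutive indices the cells run through 0, ..., 2^m - 1
   once each, so exactly min d 2^m of them lie below d. *)
Lemma count_cell_below (m z d : nat) :
  count_seq (fun i => Nat.ltb (cell m i) d) z (2 ^ m) = Nat.min d (2 ^ m).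
Proof.
  assert (Hcells : Permutation (map (cell m) (seq z (2 ^ m))) (seq 0 (2 ^ m))).
  { apply NoDup_Permutation_bis.
    - apply FinFun.Injective_map_NoDup_in; [|apply seq_NoDup].
      intros x y Hx Hy E. apply in_seq in Hx, Hy. apply (cell_inj m); lia.
    - rewrite length_map, !length_seq. lia.
    - intros k Hk. apply in_map_iff in Hk. destruct Hk as [i [<- _]].
      apply in_seq. pose proof (cell_lt m i). lia. }
  unfold count_seq.
  transitivity (length (filter (fun k => Nat.ltb k d) (map (cell m) (seq z (2 ^ m))))).
  { rewrite filter_map_swap, length_map. reflexivity. }
  rewrite (length_filter_perm _ _ _ Hcells).
  clear Hcells. induction (2 ^ m)%nat as [|M IH]; [simpl; lia|].
  rewrite seq_S, filter_app, length_app, IH. simpl.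
  destruct (Nat.ltb_spec M d); simpl; lia.
Qed.

Lemma nat_floor (M : nat) (y : R) : (1 <= M)%nat -> 0 <= y <= INR M ->
  exists c, (c < M)%nat /\ INR c <= y <= INR c + 1.
Proof.
  revert y; induction M as [|M IH]; intros y HM Hy; [lia|].
  destruct (Nat.eq_dec M 0) as [->|HM0].
  - exists 0%nat. simpl in *. split; [lia|lra].
  - destruct (Rle_dec y (INR M)).
    + destruct (IH y ltac:(lia) ltac:(lra)) as [c [Hc Hc']]. exists c. split; [lia|lra].
    + exists M. rewrite S_INR in Hy. split; [lia|lra].
Qed.

Definition psi_below (x : R) (j : nat) : bool := if Rlt_dec (psi j) x then true else false.

Lemma psi_below_spec (x : R) (j : nat) : psi_below x j = true <-> psi j < x.
Proof. unfold psi_below; destruct (Rlt_dec (psi j) x); split; intros; congruence || lra. Qed.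

(* Any 2^m consecutive van der Corput points hit [0,x) within 1 of 2^m x:
   with c = floor(2^m x), every point of a cell < c lies below x, and every
   point below x lies in a cell <= c. *)
Lemma vdc_block_below (x : R) (m z : nat) : 0 <= x <= 1 ->
  Rabs (INR (count_seq (psi_below x) z (2 ^ m)) - 2 ^ m * x) <= 1.
Proof.
  intros Hx.
  assert (HM : 0 < 2 ^ m) by (apply pow_lt; lra).
  assert (HMn : INR (2 ^ m) = 2 ^ m) by (rewrite pow_INR; reflexivity).
  destruct (nat_floor (2 ^ m) (2 ^ m * x)) as [c [Hc [Hc1 Hc2]]].
  { pose proof (Nat.pow_nonzero 2 m); lia. }
  { rewrite HMn. nra. }
  assert (Hlow : (c <= count_seq (psi_below x) z (2 ^ m))%nat).
  { replace c with (Nat.min c (2 ^ m)) at 1 by lia. rewrite <- (count_cell_below m z c).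
    apply count_seq_mono. intros i Hi. apply Nat.ltb_lt in Hi. apply psi_below_spec.
    pose proof (cell_psi m i).
    assert (INR (cell m i) + 1 <= INR c) by (rewrite <- S_INR; apply le_INR; lia).
    apply (Rmult_lt_reg_l (2 ^ m)); lra. }
  assert (Hup : (count_seq (psi_below x) z (2 ^ m) <= S c)%nat).
  { replace (S c) with (Nat.min (S c) (2 ^ m)) by lia. rewrite <- (count_cell_below m z (S c)).
    apply count_seq_mono. intros i Hi. apply psi_below_spec in Hi. apply Nat.ltb_lt.
    pose proof (cell_psi m i). apply INR_lt. rewrite S_INR.
    assert (2 ^ m * psi i < 2 ^ m * x) by (apply Rmult_lt_compat_l; lra). lra. }
  apply le_INR in Hlow. apply le_INR in Hup. rewrite S_INR in Hup.
  apply Rabs_le. lra.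
Qed.

Lemma Rabs_le_inv (x e : R) : Rabs x <= e -> - e <= x <= e.
Proof. pose proof (Rle_abs x). pose proof (Rle_abs (- x)). rewrite Rabs_Ropp in *. lra. Qed.

Lemma interval_indicator (a b y : R) (p q r : bool) : a <= b ->
  (p = true <-> a <= y < b) -> (q = true <-> y < a) -> (r = true <-> y < b) ->
  Nat.b2n r = (Nat.b2n p + Nat.b2n q)%nat.
Proof.
  intros Hab Hp Hq Hr.
  destruct p, q, r; simpl; try reflexivity; exfalso; intuition (try discriminate); lra.
Qed.

Lemma vdc_interval_discrepancy (a b : R) (p : nat -> bool) :
  0 <= a <= b -> b <= 1 -> (forall j, p j = true <-> a <= psi j < b) ->
  forall n z, Rabs (INR (count_seq p z n) - INR n * (b - a)) <= 2 * lg (INR n + 1).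
Proof.
  intros Hab Hb Hp.
  assert (Hsplit : forall z n,
    count_seq (psi_below b) z n = (count_seq p z n + count_seq (psi_below a) z n)%nat).
  { intros z n. apply count_seq_split. intro j.
    apply (interval_indicator a b (psi j)); [lra|apply Hp|apply psi_below_spec..]. }
  apply dyadic_discrepancy. intros z m.
  pose proof (vdc_block_below a m z ltac:(lra)) as Ha.
  pose proof (vdc_block_below b m z ltac:(lra)) as Hb'.
  rewrite Hsplit, plus_INR in Hb'.
  apply Rabs_le_inv in Ha, Hb'. apply Rabs_le. lra.
Qed.

Lemma router_choice_iff (P : nat -> nat -> R) (v : nat) (ord : list nat)
    (sigma_v : nat -> nat) (k : nat) :
  NoDup ord -> (forall x, In x ord -> 0 <= P v x) -> is_qr_router P v ord sigma_v ->
  (k < length ord)%nat ->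
  forall i, sigma_v i = nth k ord 0%nat <->
    sumR (P v) (firstn k ord) <= psi i < sumR (P v) (firstn (S k) ord).
Proof.
  intros ND Hnn Hsigma Hk i. destruct (Hsigma i) as [k' [Hk' [Hs [H1 H2]]]]. split.
  - intro E. assert (k' = k) as <- by (apply (proj1 (NoDup_nth ord 0%nat) ND); congruence).
    auto.
  - intros [H3 H4]. destruct (Nat.lt_total k' k) as [Hlt|[<-|Hgt]]; [|exact Hs|].
    + pose proof (sumR_firstn_mono (P v) ord Hnn (S k') k Hlt). lra.
    + pose proof (sumR_firstn_mono (P v) ord Hnn (S k) k' Hgt). lra.
Qed.

Lemma router_in_ord (P : nat -> nat -> R) (v : nat) (ord : list nat) (sigma_v : nat -> nat) :
  is_qr_router P v ord sigma_v -> forall i, In (sigma_v i) ord.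
Proof. intros Hsigma i. destruct (Hsigma i) as [k [Hk [-> _]]]. apply nth_In, Hk. Qed.

Lemma nbr_ordering_sum (N : nat) (P : nat -> nat -> R) (v : nat) (ord : list nat) :
  stochastic N P -> inV N v -> is_nbr_ordering N P v ord -> sumR (P v) ord = 1.
Proof.
  intros [Pnn Psum] Hv [ND Hin].
  set (pos := fun w => if Rlt_dec 0 (P v w) then true else false).
  rewrite <- (Psum v Hv), <- (sumR_filter_zero (P v) pos (seq 1 N)).
  - apply sumR_perm, NoDup_Permutation; [exact ND|apply NoDup_filter, seq_NoDup|].
    intro x. rewrite filter_In, in_seq, Hin. unfold pos, inV.
    destruct (Rlt_dec 0 (P v x)); intuition (try lia; try lra; try discriminate).
  - intros x Hx Hp. apply in_seq in Hx. unfold pos in Hp.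
    destruct (Rlt_dec 0 (P v x)); [discriminate|].
    pose proof (Pnn v x Hv ltac:(unfold inV; lia)). lra.
Qed.

Theorem lemma5p5 (N : nat) (P : nat -> nat -> R) (hP : stochastic N P)
  (ord : nat -> list nat) (hord : forall v, inV N v -> is_nbr_ordering N P v (ord v))
  (sigma : nat -> nat -> nat)
  (hsigma : forall v, inV N v -> is_qr_router P v (ord v) (sigma v)) :
  forall v u z z' : nat, inV N v -> inV N u -> (z < z')%nat ->
    Rabs (INR (Icount (sigma v) u z z') - INR (z' - z) * P v u)
      <= 2 * lg (INR (z' - z + 1)).
Proof.
  intros v u z z' Hv Hu _.
  pose proof (nbr_ordering_sum N P v (ord v) hP Hv (hord v Hv)) as Htotal.
  destruct (hord v Hv) as [ND Hin]. specialize (hsigma v Hv).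
  assert (Hnn : forall x, In x (ord v) -> 0 <= P v x) by (intros x Hx; apply Hin in Hx; lra).
  change (Icount (sigma v) u z z') with (count_seq (fun j => Nat.eqb (sigma v j) u) z (z' - z)).
  rewrite plus_INR; change (INR 1) with 1.
  destruct (Rlt_dec 0 (P v u)) as [Hpos|Hzero].
  - destruct (In_nth (ord v) u 0%nat (proj2 (Hin u) (conj Hu Hpos))) as [k [Hk Hnth]].
    replace (P v u) with (sumR (P v) (firstn (S k) (ord v)) - sumR (P v) (firstn k (ord v)))
      by (rewrite sumR_firstn_S, Hnth by exact Hk; ring).
    apply vdc_interval_discrepancy.
    + split; [apply (sumR_firstn_mono _ _ Hnn 0)|apply sumR_firstn_mono]; auto with arith.
    + rewrite <- Htotal. rewrite <- (firstn_all (ord v)) at 2. apply sumR_firstn_mono; auto.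
    + intro j. rewrite Nat.eqb_eq, <- Hnth.
      exact (router_choice_iff P v (ord v) (sigma v) k ND Hnn hsigma Hk j).
  - assert (Hnever : forall j, Nat.eqb (sigma v j) u = false).
    { intro j. apply Nat.eqb_neq. intro E.
      pose proof (router_in_ord P v (ord v) (sigma v) hsigma j) as Hj.
      rewrite E in Hj. apply Hin in Hj. lra. }
    replace (P v u) with 0 by (pose proof (proj1 hP v u Hv Hu); lra).
    unfold count_seq. rewrite (filter_ext _ _ Hnever), filter_false. simpl INR.
    rewrite Rmult_0_r, Rminus_0_r, Rabs_R0.
    pose proof (pos_INR (z' - z)). apply Rmult_le_pos; [lra|].
    rewrite <- lg_one. apply lg_mono; lra.
Qed.
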